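(* Let $\mathbf{x}:M\to\mathbb{R}^4_1$ be a complete, algebraic stationary surface, and let $z$ be a local complex coordinate on (the oriented double cover of) $M$ centered at a good singular end $z=0$ with multiplicity $\widetilde d=1$ and index $\mathrm{ind}=m\ge 1$, whose flux vector is zero (i.e. $\mathbf{x}_z\,\mathrm{d}z$ has zero residue at $z=0$). Then the vector-valued meromorphic function $\mathbf{x}_z$ has a Laurent expansion around $z=0$ of the form $$\mathbf{x}_z=\Big(\sum_{k=1}^m\frac{\alpha_{k+2}}{z^{k+2}}\Big)\mathbf{v}_0+\frac{1}{z^2}\mathbf{v}_1+O(1),$$ where $\alpha_{k+2}\in\mathbb{C}$ with $\alpha_{m+2}\neq 0$, $\mathbf{v}_0\in\mathbb{R}^4_1$ is a nonzero lightlike vector, $\mathbf{v}_1\in\mathbb{C}^4_1$ is an isotropic vector, and $\mathbf{v}_0,\mathrm{Re}(\mathbf{v}_1),\mathrm{Im}(\mathbf{v}_1)$ span a degenerate $3$-dimensional subspace of $\mathbb{R}^4_1$.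
   Context: $\mathbb{R}^4_1$ is $\mathbb{R}^4$ with the Lorentz inner product $\langle \mathbf{x},\mathbf{x}\rangle=x_1^2+x_2^2+x_3^2-x_4^2$, extended complex-bilinearly to $\mathbb{C}^4_1=\mathbb{C}^4$; a vector $\mathbf{v}\in\mathbb{C}^4_1$ is isotropic if $\langle\mathbf{v},\mathbf{v}\rangle=0$, and a real vector is lightlike if it is nonzero with $\langle\mathbf{v},\mathbf{v}\rangle=0$. A stationary surface is a spacelike immersed surface with zero mean curvature; locally $\mathbf{x}=2\,\mathrm{Re}\int(\phi+\psi,\,-\mathrm{i}(\phi-\psi),\,1-\phi\psi,\,1+\phi\psi)\,\mathrm{d}h$ with meromorphic Gauss maps $\phi,\psi$ and holomorphic $1$-form $\mathrm{d}h$, so $\mathbf{x}_z\,\mathrm{d}z=(\phi+\psi,-\mathrm{i}(\phi-\psi),1-\phi\psi,1+\phi\psi)\,\mathrm{d}h$. Algebraic means $\mathbf{x}_z\,\mathrm{d}z$ extends meromorphically to a compact Riemann surface from which finitely many punctures (the ends) are removed. An end $p$ is singular if $\phi(p)=\overline{\psi(p)}$; if $\phi$ and $\psi$ take this common value (conjugated for $\psi$) with multiplicities $m'$ and $n'$ at $p$, the end is good when $m'\ne n'$, and its index is $\mathrm{ind}_p=m'$ if $m'<n'$ and $\mathrm{ind}_p=-n'$ if $m'>n'$ (for a regular end, $\mathrm{ind}_p=0$); $\mathrm{ind}^+_p=|\mathrm{ind}_p|$. The multiplicity of the end is $\widetilde d=d-\mathrm{ind}^+_p$, where $d+1$ is the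 order of the pole of $\mathbf{x}_z\,\mathrm{d}z$ at $p$. *)

From Stdlib Require Import Reals ZArith.
From Coquelicot Require Import Coquelicot.

Local Open Scope C_scope.

Record V4 := mkV4 { vc1 : C ; vc2 : C ; vc3 : C ; vc4 : C }.
Record R4 := mkR4 { vr1 : R ; vr2 : R ; vr3 : R ; vr4 : R }.

Definition V4add (u v : V4) : V4 :=
  mkV4 (vc1 u + vc1 v) (vc2 u + vc2 v) (vc3 u + vc3 v) (vc4 u + vc4 v).
Definition V4scale (a : C) (v : V4) : V4 :=
  mkV4 (a * vc1 v) (a * vc2 v) (a * vc3 v) (a * vc4 v).
Definition V4zero : V4 := mkV4 0 0 0 0.
Definition V4norm (v : V4) : R :=
  (Cmod (vc1 v) + Cmod (vc2 v) + Cmod (vc3 v) + Cmod (vc4 v))%R.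

Definition R4toV4 (v : R4) : V4 :=
  mkV4 (RtoC (vr1 v)) (RtoC (vr2 v)) (RtoC (vr3 v)) (RtoC (vr4 v)).
Definition V4Re (v : V4) : R4 := mkR4 (Re (vc1 v)) (Re (vc2 v)) (Re (vc3 v)) (Re (vc4 v)).
Definition V4Im (v : V4) : R4 := mkR4 (Im (vc1 v)) (Im (vc2 v)) (Im (vc3 v)) (Im (vc4 v)).

Definition R4zero : R4 := mkR4 0 0 0 0.
Definition R4lin3 (a b c : R) (u1 u2 u3 : R4) : R4 :=
  mkR4 (a * vr1 u1 + b * vr1 u2 + c * vr1 u3)%R
       (a * vr2 u1 + b * vr2 u2 + c * vr2 u3)%R
       (a * vr3 u1 + b * vr3 u2 + c * vr3 u3)%R
       (a * vr4 u1 + b * vr4 u2 + c * vr4 u3)%R.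

Definition lorR (u v : R4) : R :=
  (vr1 u * vr1 v + vr2 u * vr2 v + vr3 u * vr3 v - vr4 u * vr4 v)%R.
Definition lorC (u v : V4) : C :=
  vc1 u * vc1 v + vc2 u * vc2 v + vc3 u * vc3 v - vc4 u * vc4 v.

Definition isotropic (v : V4) : Prop := lorC v v = 0.
Definition lightlike (v : R4) : Prop := v <> R4zero /\ lorR v v = 0%R.

(** [u1,u2,u3] span a 3-dimensional subspace of R^4_1 on which the Lorentz
    form is degenerate (its radical is nonzero). *)
Definition span_degenerate_3dim (u1 u2 u3 : R4) : Prop :=
  (forall a b c : R, R4lin3 a b c u1 u2 u3 = R4zero -> a = 0%R /\ b = 0%R /\ c = 0%R) /\
  (exists a b c : R,
      let w := R4lin3 a b c u1 u2 u3 in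
      w <> R4zero /\ lorR w u1 = 0%R /\ lorR w u2 = 0%R /\ lorR w u3 = 0%R).

(** [laurent f r a]: on the punctured disc 0 < |z| < r, f is given by the
    convergent Laurent series  sum_{k in Z} a_k z^k  with finite principal part
    (i.e. f is meromorphic at 0, holomorphic on the punctured disc). *)
Definition laurent (f : C -> C) (r : R) (a : Z -> C) : Prop :=
  (0 < r)%R /\
  exists N : nat,
    (forall k : Z, (k < - Z.of_nat N)%Z -> a k = 0) /\
    forall z : C, (0 < Cmod z < r)%R ->
      is_series (fun n : nat => a (Z.of_nat n - Z.of_nat N)%Z * Cpow z n)
                (Cpow z N * f z).

Definition laurentV (F : C -> V4) (r : R) (b : Z -> V4) : Prop :=
  laurent (fun z => vc1 (F z)) r (fun k => vc1 (b k)) /\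
  laurent (fun z => vc2 (F z)) r (fun k => vc2 (b k)) /\
  laurent (fun z => vc3 (F z)) r (fun k => vc3 (b k)) /\
  laurent (fun z => vc4 (F z)) r (fun k => vc4 (b k)).

Definition has_order (a : Z -> C) (k : Z) : Prop :=
  a k <> 0 /\ forall j : Z, (j < k)%Z -> a j = 0.
Definition has_orderV (b : Z -> V4) (k : Z) : Prop :=
  b k <> V4zero /\ forall j : Z, (j < k)%Z -> b j = V4zero.

(** Values in the Riemann sphere: [Some c] is c in C, [None] is infinity. *)
Definition oconj (v : option C) : option C :=
  match v with Some c => Some (Cconj c) | None => None end.

(** The meromorphic germ with Laurent coefficients [a] takes the value [v] at 0
    with multiplicity [mu] (>= 1). *)
Definition mult_value (a : Z -> C) (v : option C) (mu : nat) : Prop :=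
  (1 <= mu)%nat /\
  match v with
  | Some c => has_order (fun k => if Z.eqb k 0 then a k - c else a k) (Z.of_nat mu)
  | None => has_order a (- Z.of_nat mu)%Z
  end.

(** The end z = 0 is singular: phi(0) = conj(psi(0)). *)
Definition singular_end (aphi apsi : Z -> C) : Prop :=
  exists v m' n', mult_value aphi v m' /\ mult_value apsi (oconj v) n'.

Definition good_singular_end (aphi apsi : Z -> C) : Prop :=
  exists v m' n', mult_value aphi v m' /\ mult_value apsi (oconj v) n' /\ m' <> n'.

Definition end_index (aphi apsi : Z -> C) (i : Z) : Prop :=
  (exists v m' n', mult_value aphi v m' /\ mult_value apsi (oconj v) n' /\
     (((m' < n')%nat /\ i = Z.of_nat m') \/ ((n' < m')%nat /\ i = (- Z.of_nat n')%Z)))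
  \/ (~ singular_end aphi apsi /\ i = 0%Z).

(** x_z from the Weierstrass data (phi, psi, dh = hp dz). *)
Definition xz (phi psi hp : C -> C) (z : C) : V4 :=
  mkV4 ((phi z + psi z) * hp z)
       ((- Ci * (phi z - psi z)) * hp z)
       ((1 - phi z * psi z) * hp z)
       ((1 + phi z * psi z) * hp z).

From Stdlib Require Import Reals ZArith Lra Lia.
From Coquelicot Require Import Coquelicot.

Local Open Scope C_scope.

(* Write [x_z = h G(phi, psi)] with [G(p, s) = (p + s, -i(p - s), 1 - p s, 1 + p s)].
   At the end, say [phi(0) = c = conj psi(0)] (the case where both are infinite is the
   same after inverting [phi] and [psi]); [phi - c] vanishes to order exactly [m] and
   [psi - conj c] to order [> m].  Expanding [G] at [(c, conj c)] gives
     [x_z = h v0 + h (phi - c) w + h (psi - conj c) w' + h (phi - c)(psi - conj c) y]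
   with [v0] real lightlike and [w] isotropic and orthogonal to [v0].  As [x_z] has a
   pole of order [m + 2], so has [h]: the [w]-coordinate has a pole of order exactly [2],
   the [w']- and [y]-coordinates have at most simple poles, which the zero residue
   removes.  So every principal coefficient of order [>= 3] is a multiple of [v0], the
   [z^-2] coefficient is [v1 = s v0 + t w] with [t <> 0], and [v0] spans the radical of
   [span (v0, Re v1, Im v1)].  Laurent coefficients are identified as limits of
   [z^j f(z)] at [0]. *)

(** * Limits at the origin *)

Lemma Cmod_pos_neq0 (z : C) : (0 < Cmod z)%R -> z <> 0.
Proof. intros h ->. rewrite Cmod_0 in h. lra. Qed.

Definition near0 (P : C -> Prop) : Prop :=
  exists rho : R, (0 < rho)%R /\ forall z : C, (0 < Cmod z < rho)%R -> P z.

Lemma near0_and (P Q : C -> Prop) : near0 P -> near0 Q -> near0 (fun z => P z /\ Q z).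
Proof.
  intros [r1 [h1 H1]] [r2 [h2 H2]]. exists (Rmin r1 r2). split; [now apply Rmin_glb_lt|].
  intros z hz. pose proof (Rmin_l r1 r2). pose proof (Rmin_r r1 r2).
  split; [apply H1 | apply H2]; lra.
Qed.

Lemma near0_mono (P Q : C -> Prop) :
  (forall z : C, z <> 0 -> P z -> Q z) -> near0 P -> near0 Q.
Proof.
  intros HPQ [rho [hrho H]]. exists rho. split; [exact hrho|].
  intros z hz. apply HPQ; [apply Cmod_pos_neq0, hz | now apply H].
Qed.

Lemma near0_all (P : C -> Prop) : (forall z : C, z <> 0 -> P z) -> near0 P.
Proof.
  intros H. apply (near0_mono (fun _ => True)); [now intros z hz _; apply H|].
  exists 1%R. split; [lra | easy].
Qed.

Lemma near0_witness (P : C -> Prop) : near0 P -> exists z, P z.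
Proof.
  intros [rho [hrho H]]. exists (RtoC (rho / 2)). apply H.
  rewrite Cmod_R, Rabs_pos_eq; lra.
Qed.

Definition Lim0 (f : C -> C) (L : C) : Prop :=
  forall eps : R, (0 < eps)%R -> near0 (fun z => Cmod (f z - L) < eps)%R.

Lemma Cmod_le_sub (x y : C) : (Cmod x <= Cmod (x - y) + Cmod y)%R.
Proof. replace x with ((x - y) + y) at 1 by ring. apply Cmod_triangle. Qed.

Lemma Lim0_unique (f : C -> C) (L1 L2 : C) : Lim0 f L1 -> Lim0 f L2 -> L1 = L2.
Proof.
  intros H1 H2. destruct (Ceq_dec L1 L2) as [e|ne]; [exact e|exfalso].
  assert (hd : (0 < Cmod (L1 - L2))%R).
  { apply Cmod_gt_0. intros h. apply ne. replace L1 with ((L1 - L2) + L2) by ring.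
    rewrite h. ring. }
  set (e := (Cmod (L1 - L2) / 2)%R).
  destruct (near0_witness _ (near0_and _ _ (H1 e ltac:(unfold e; lra)) (H2 e ltac:(unfold e; lra))))
    as [z [h1 h2]].
  assert (Cmod (L1 - L2) <= Cmod (f z - L2) + Cmod (f z - L1))%R.
  { replace (L1 - L2) with ((f z - L2) + - (f z - L1)) by ring.
    rewrite <- (Cmod_opp (f z - L1)). apply Cmod_triangle. }
  unfold e in *; lra.
Qed.

Lemma Lim0_ext (f g : C -> C) (L : C) : near0 (fun z => f z = g z) -> Lim0 f L -> Lim0 g L.
Proof.
  intros Hfg H eps heps.
  apply (near0_mono (fun z => Cmod (f z - L) < eps /\ f z = g z)%R);
    [|now apply near0_and; [apply H|]].
  intros z _ [h <-]. exact h.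
Qed.

Lemma Lim0_congr (f g : C -> C) (L : C) :
  Lim0 f L -> (forall z : C, z <> 0 -> f z = g z) -> Lim0 g L.
Proof. intros H Hfg. exact (Lim0_ext f g L (near0_all _ Hfg) H). Qed.

Lemma Lim0_const (c : C) : Lim0 (fun _ => c) c.
Proof.
  intros eps he. apply near0_all. intros z _. replace (c - c) with (RtoC 0) by ring.
  rewrite Cmod_0. exact he.
Qed.

Lemma Lim0_id : Lim0 (fun z => z) 0.
Proof.
  intros eps he. exists eps. split; [exact he|]. intros z hz.
  replace (z - 0) with z by ring. lra.
Qed.

Lemma Lim0_plus (f g : C -> C) (L M : C) :
  Lim0 f L -> Lim0 g M -> Lim0 (fun z => f z + g z) (L + M).
Proof.
  intros H1 H2 eps he.
  apply (near0_mono (fun z => Cmod (f z - L) < eps / 2 /\ Cmod (g z - M) < eps / 2)%R);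
    [|apply near0_and; [apply H1 | apply H2]; lra].
  intros z _ [h1 h2]. replace (f z + g z - (L + M)) with ((f z - L) + (g z - M)) by ring.
  eapply Rle_lt_trans; [apply Cmod_triangle | lra].
Qed.

Lemma Lim0_bounded (f : C -> C) (L : C) : Lim0 f L -> near0 (fun z => Cmod (f z) <= Cmod L + 1)%R.
Proof.
  intros H. eapply near0_mono; [|exact (H 1%R Rlt_0_1)]. intros z _ h. cbv beta in *.
  generalize (Cmod_le_sub (f z) L). lra.
Qed.

Lemma Lim0_mult (f g : C -> C) (L M : C) :
  Lim0 f L -> Lim0 g M -> Lim0 (fun z => f z * g z) (L * M).
Proof.
  intros H1 H2 eps he.
  pose proof (Cmod_ge_0 L). pose proof (Cmod_ge_0 M).
  set (e1 := (eps / (2 * (Cmod M + 1)))%R). set (e2 := (eps / (2 * (Cmod L + 1)))%R).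
  apply (near0_mono (fun z => (Cmod (f z - L) < e1 /\ Cmod (g z - M) < e2)
                              /\ Cmod (g z) <= Cmod M + 1)%R).
  2:{ apply near0_and; [|now apply Lim0_bounded].
      apply near0_and; [apply H1 | apply H2]; apply Rdiv_lt_0_compat; lra. }
  intros z _ [[h1 h2] hg].
  replace (f z * g z - L * M) with ((f z - L) * g z + L * (g z - M)) by ring.
  eapply Rle_lt_trans; [apply Cmod_triangle|]. rewrite !Cmod_mult.
  pose proof (Cmod_ge_0 (f z - L)). pose proof (Cmod_ge_0 (g z - M)). pose proof (Cmod_ge_0 (g z)).
  assert (B1 : (Cmod (f z - L) * Cmod (g z) <= e1 * (Cmod M + 1))%R)
    by (apply Rmult_le_compat; lra).
  assert (B2 : (Cmod L * Cmod (g z - M) <= Cmod L * e2)%R) by (apply Rmult_le_compat_l; lra).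
  assert (E1 : (e1 * (Cmod M + 1) = eps / 2)%R) by (unfold e1; field; lra).
  assert (E2 : (Cmod L * e2 < eps / 2)%R).
  { apply Rlt_le_trans with ((Cmod L + 1) * e2)%R.
    - apply Rmult_lt_compat_r; [unfold e2; apply Rdiv_lt_0_compat|]; lra.
    - right. unfold e2. field. lra. }
  lra.
Qed.

Lemma Lim0_inv (f : C -> C) (L : C) : L <> 0 -> Lim0 f L -> Lim0 (fun z => / f z) (/ L).
Proof.
  intros hL H eps he.
  assert (hl : (0 < Cmod L)%R) by now apply Cmod_gt_0.
  pose proof (Rmin_l (Cmod L / 2) (eps * (Cmod L * Cmod L) / 2)).
  pose proof (Rmin_r (Cmod L / 2) (eps * (Cmod L * Cmod L) / 2)).
  set (e := Rmin (Cmod L / 2) (eps * (Cmod L * Cmod L) / 2)) in *.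
  assert (hee : (0 < e)%R).
  { apply Rmin_glb_lt; [lra|]. apply Rdiv_lt_0_compat; [|lra].
    apply Rmult_lt_0_compat; [lra | now apply Rmult_lt_0_compat]. }
  eapply near0_mono; [|exact (H e hee)]. intros z _ h. cbv beta in *.
  assert (hf : (Cmod L / 2 < Cmod (f z))%R).
  { generalize (Cmod_le_sub L (f z)).
    replace (L - f z) with (- (f z - L)) by ring. rewrite Cmod_opp. lra. }
  assert (fz0 : f z <> 0) by (intros e0; rewrite e0, Cmod_0 in hf; lra).
  replace (/ f z - / L) with (- (f z - L) * / (f z * L)) by (field; auto).
  rewrite Cmod_mult, Cmod_opp, Cmod_inv, Cmod_mult by (now apply Cmult_neq_0).
  apply Rlt_le_trans with (eps * (Cmod L * Cmod L) / 2 * / (Cmod (f z) * Cmod L))%R.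
  - apply Rmult_lt_compat_r; [apply Rinv_0_lt_compat, Rmult_lt_0_compat; lra|].
    lra.
  - apply Rle_trans with (eps * (Cmod L * Cmod L) / 2 * / (Cmod L / 2 * Cmod L))%R.
    + apply Rmult_le_compat_l; [apply Rmult_le_pos; [|lra]; apply Rmult_le_pos; nra|].
      apply Rinv_le_contravar; [apply Rmult_lt_0_compat|apply Rmult_le_compat_r]; lra.
    + right. field. lra.
Qed.

Lemma Lim0_pow (k : nat) : (1 <= k)%nat -> Lim0 (fun z => Cpow z k) 0.
Proof.
  intros hk. induction k as [|k IH]; [lia|].
  destruct (Nat.eq_dec k 0) as [->|hk0].
  - apply (Lim0_ext (fun z => z)); [apply near0_all; intros z _; simpl; ring | apply Lim0_id].
  - replace (RtoC 0) with (0 * 0) by ring.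
    apply (Lim0_ext (fun z => z * Cpow z k)); [now apply near0_all|].
    apply Lim0_mult; [apply Lim0_id | apply IH; lia].
Qed.

Lemma Lim0_nonzero (f : C -> C) (L : C) : Lim0 f L -> L <> 0 -> near0 (fun z => f z <> 0).
Proof.
  intros H hL. assert (hl : (0 < Cmod L)%R) by now apply Cmod_gt_0.
  eapply near0_mono; [|exact (H (Cmod L) hl)]. intros z _ h e. cbv beta in h.
  rewrite e in h. replace (0 - L) with (- L) in h by ring. rewrite Cmod_opp in h. lra.
Qed.

Lemma Lim0_mult_bounded (f g : C -> C) (M : R) :
  Lim0 f 0 -> near0 (fun z => Cmod (g z) <= M)%R -> Lim0 (fun z => f z * g z) 0.
Proof.
  intros Hf Hg eps he.
  assert (hM : (0 < Rabs M + 1)%R) by (pose proof (Rabs_pos M); lra).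
  eapply near0_mono; [|exact (near0_and _ _ (Hf (eps / (Rabs M + 1))%R ltac:(now apply Rdiv_lt_0_compat)) Hg)].
  intros z _ [h1 h2]. replace (f z - 0) with (f z) in h1 by ring.
  replace (f z * g z - 0) with (f z * g z) by ring. rewrite Cmod_mult.
  pose proof (Rle_abs M). pose proof (Cmod_ge_0 (f z)).
  apply Rle_lt_trans with (Cmod (f z) * (Rabs M + 1))%R; [apply Rmult_le_compat_l; lra|].
  apply Rlt_le_trans with (eps / (Rabs M + 1) * (Rabs M + 1))%R.
  - now apply Rmult_lt_compat_r.
  - right. field. lra.
Qed.

(** * Power series and Laurent coefficients *)

Lemma sum_n_half_pow_le (n : nat) : (sum_n (fun k => (1 / 2) ^ k) n <= 2)%R.
Proof.
  assert (E : (sum_n (fun k => (1 / 2) ^ k) n = 2 - (1 / 2) ^ n)%R).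
  { induction n as [|n IH]; [rewrite sum_O; simpl; lra|].
    rewrite sum_Sn, IH. simpl. change (plus ?x ?y) with (x + y)%R. field. }
  rewrite E. pose proof (pow_le (1 / 2) n ltac:(lra)). lra.
Qed.

Lemma is_series_Cmod_le (a : nat -> C) (l : C) (B : R) :
  is_series a l -> (forall n, Cmod (sum_n a n) <= B)%R -> (Cmod l <= B)%R.
Proof.
  intros H hb.
  assert (hl : is_lim_seq (fun n => norm (sum_n a n)) (norm l)).
  { eapply filterlim_comp; [exact H | apply filterlim_norm]. }
  exact (is_lim_seq_le _ _ _ _ hb hl (is_lim_seq_const B)).
Qed.

(* Abel's lemma: convergence at [r/2] bounds the terms [|c n| (r/2)^n], and the
   series is then dominated by a geometric one on [|z| < r/4]. *)
Lemma pseries_bounded_near0 (c : nat -> C) (Sf : C -> C) (r : R) : (0 < r)%R ->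
  (forall z : C, (0 < Cmod z < r)%R -> is_series (fun n => c n * Cpow z n) (Sf z)) ->
  exists M : R, near0 (fun z => Cmod (Sf z) <= M)%R.
Proof.
  intros r_pos Sf_series. set (z0 := RtoC (r / 2)).
  assert (hz0 : Cmod z0 = (r / 2)%R) by (unfold z0; rewrite Cmod_R; apply Rabs_pos_eq; lra).
  set (u := fun n => c n * Cpow z0 n).
  destruct (filterlim_bounded (fun n => sum_n u n) (ex_intro _ _ (Sf_series z0 ltac:(lra))))
    as [M0 hM0].
  change (forall n, Cmod (sum_n u n) <= M0)%R in hM0.
  assert (hM0pos : (0 <= M0)%R) by (pose proof (hM0 0%nat); pose proof (Cmod_ge_0 (sum_n u 0)); lra).
  assert (terms : forall n, (Cmod (c n) * (r / 2) ^ n <= 2 * M0)%R).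
  { intros n. rewrite <- hz0, <- Cmod_pow, <- Cmod_mult. fold (u n). destruct n as [|n].
    - pose proof (hM0 0%nat). rewrite sum_O in *. lra.
    - replace (u (S n)) with (sum_n u (S n) + - sum_n u n) by (rewrite sum_Sn; cbn; ring).
      eapply Rle_trans; [apply Cmod_triangle|]. rewrite Cmod_opp.
      pose proof (hM0 n). pose proof (hM0 (S n)). lra. }
  exists (4 * M0)%R, (r / 4)%R. split; [lra|]. intros z hz.
  apply (is_series_Cmod_le _ _ _ (Sf_series z ltac:(lra))). intros n.
  eapply Rle_trans; [exact (@norm_sum_n_m C_AbsRing C_NormedModule (fun n => c n * Cpow z n) 0 n)|].
  apply Rle_trans with (sum_n_m (fun k => 2 * M0 * (1 / 2) ^ k) 0 n)%R.
  - apply sum_n_m_le. intros k. change (norm ?x) with (Cmod x). rewrite Cmod_mult, Cmod_pow.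
    apply Rle_trans with (Cmod (c k) * (r / 2) ^ k * (1 / 2) ^ k)%R.
    + rewrite Rmult_assoc, <- Rpow_mult_distr. apply Rmult_le_compat_l; [apply Cmod_ge_0|].
      apply pow_incr. pose proof (Cmod_ge_0 z). lra.
    + apply Rmult_le_compat_r; [apply pow_le; lra | apply terms].
  - rewrite (sum_n_m_mult_l (K := R_Ring)). change (mult ?x ?y) with (x * y)%R.
    apply Rle_trans with (2 * M0 * 2)%R; [|lra].
    apply Rmult_le_compat_l; [lra | exact (sum_n_half_pow_le n)].
Qed.

Lemma pseries_Lim0 (c : nat -> C) (Sf : C -> C) (r : R) : (0 < r)%R ->
  (forall z : C, (0 < Cmod z < r)%R -> is_series (fun n => c n * Cpow z n) (Sf z)) ->
  Lim0 Sf (c 0%nat).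
Proof.
  intros r_pos Sf_series.
  assert (shifted : forall z, (0 < Cmod z < r)%R ->
    is_series (fun n => c (S n) * Cpow z n) ((Sf z - c 0%nat) / z)).
  { intros z hz. assert (z <> 0) by now apply Cmod_pos_neq0.
    apply (is_series_ext (fun n => scal (/ z) (c (S n) * Cpow z (S n)))).
    { intros n. cbn. field. assumption. }
    replace ((Sf z - c 0%nat) / z) with (scal (/ z) (Sf z - c 0%nat)) by (cbn; field; auto).
    apply (@is_series_scal C_AbsRing C_NormedModule), (@is_series_incr_1 C_AbsRing C_NormedModule (fun n => c n * Cpow z n)).
    match goal with |- is_series _ ?l => replace l with (Sf z) by (cbn; ring) end.
    now apply Sf_series. }
  destruct (pseries_bounded_near0 _ _ _ r_pos shifted) as [M HM].
  replace (c 0%nat) with (c 0%nat + 0) by ring.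
  apply (Lim0_ext (fun z => c 0%nat + z * ((Sf z - c 0%nat) / z))).
  - apply near0_all. intros z hz. field. exact hz.
  - apply Lim0_plus; [apply Lim0_const | exact (Lim0_mult_bounded _ _ M Lim0_id HM)].
Qed.

Lemma pseries_Lim0_div_pow (c : nat -> C) (Sf : C -> C) (r : R) (q : nat) : (0 < r)%R ->
  (forall z : C, (0 < Cmod z < r)%R -> is_series (fun n => c n * Cpow z n) (Sf z)) ->
  (forall n, (n < q)%nat -> c n = 0) ->
  Lim0 (fun z => Sf z / Cpow z q) (c q).
Proof.
  intros r_pos Sf_series hq. replace (c q) with (c (q + 0)%nat) by now rewrite Nat.add_0_r.
  apply (pseries_Lim0 (fun n => c (q + n)%nat) _ r r_pos). intros z hz.
  assert (hz0 : z <> 0) by now apply Cmod_pos_neq0.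
  assert (Cpow z q <> 0) by now apply Cpow_nz.
  apply (is_series_ext (fun n => scal (/ Cpow z q) (c (q + n)%nat * Cpow z (q + n)))).
  { intros n. rewrite Cpow_add_r. cbn. field. assumption. }
  replace (Sf z / Cpow z q) with (scal (/ Cpow z q) (Sf z)) by (cbn; field; assumption).
  apply (@is_series_scal C_AbsRing C_NormedModule).
  destruct q as [|q]; [now apply Sf_series|].
  apply (@is_series_incr_n C_AbsRing C_NormedModule (fun n => c n * Cpow z n)); [lia|].
  unfold sum_n. rewrite (sum_n_m_ext_loc _ (fun _ => zero)), sum_n_m_const_zero.
  - rewrite plus_zero_r. now apply Sf_series.
  - intros k hk. rewrite hq by lia. cbn. ring.
Qed.

Lemma laurent_Lim0_coef (f : C -> C) (r : R) (a : Z -> C) (j i : nat) : laurent f r a ->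
  (forall k, (k < Z.of_nat i - Z.of_nat j)%Z -> a k = 0) ->
  Lim0 (fun z => Cpow z j * f z / Cpow z i) (a (Z.of_nat i - Z.of_nat j)%Z).
Proof.
  intros [r_pos [N [HN Hs]]] Hk.
  destruct (le_lt_dec j (N + i)) as [hle|hlt].
  - set (q := (N + i - j)%nat).
    assert (L := pseries_Lim0_div_pow (fun n => a (Z.of_nat n - Z.of_nat N)%Z) _ r q r_pos Hs
      (fun n hn => Hk (Z.of_nat n - Z.of_nat N)%Z ltac:(unfold q in hn; lia))).
    replace (Z.of_nat i - Z.of_nat j)%Z with (Z.of_nat q - Z.of_nat N)%Z by (unfold q; lia).
    apply (Lim0_congr _ _ _ L). intros z hz.
    assert (e : Cpow z (N + i) = Cpow z q * Cpow z j) by (rewrite <- Cpow_add_r; f_equal; unfold q; lia).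
    rewrite Cpow_add_r in e.
    assert (Cpow z i <> 0) by now apply Cpow_nz.
    assert (Cpow z q <> 0) by now apply Cpow_nz.
    replace (Cpow z N) with (Cpow z q * Cpow z j / Cpow z i) by (rewrite <- e; field; assumption).
    cbv beta. field. split; assumption.
  - set (t := (j - i - N)%nat).
    assert (L := pseries_Lim0_div_pow (fun n => a (Z.of_nat n - Z.of_nat N)%Z) _ r 0 r_pos Hs
      (fun n hn => False_ind _ (Nat.nlt_0_r n hn))).
    rewrite (HN (Z.of_nat i - Z.of_nat j)%Z) by lia.
    replace (RtoC 0) with (a (Z.of_nat 0 - Z.of_nat N)%Z * 0) by ring.
    apply (Lim0_congr _ _ _ (Lim0_mult _ _ _ _ L (Lim0_pow t ltac:(unfold t; lia)))). intros z hz.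
    assert (e : Cpow z j = Cpow z N * Cpow z t * Cpow z i)
      by (rewrite <- !Cpow_add_r; f_equal; unfold t; lia).
    assert (Cpow z i <> 0) by now apply Cpow_nz.
    rewrite e. simpl. field. assumption.
Qed.

Lemma laurent_Lim0_pole (f : C -> C) (r : R) (a : Z -> C) (j : nat) : laurent f r a ->
  (forall k, (k < - Z.of_nat j)%Z -> a k = 0) ->
  Lim0 (fun z => Cpow z j * f z) (a (- Z.of_nat j)%Z).
Proof.
  intros Hf Hk.
  assert (L := laurent_Lim0_coef f r a j 0 Hf (fun k hk => Hk k ltac:(lia))).
  replace (Z.of_nat 0 - Z.of_nat j)%Z with (- Z.of_nat j)%Z in L by lia.
  apply (Lim0_congr _ _ _ L). intros z hz. simpl. field.
Qed.

Lemma laurent_Lim0_zero (f : C -> C) (r : R) (a : Z -> C) (i : nat) : laurent f r a ->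
  (forall k, (k < Z.of_nat i)%Z -> a k = 0) ->
  Lim0 (fun z => f z / Cpow z i) (a (Z.of_nat i)).
Proof.
  intros Hf Hk.
  assert (L := laurent_Lim0_coef f r a 0 i Hf (fun k hk => Hk k ltac:(lia))).
  replace (Z.of_nat i - Z.of_nat 0)%Z with (Z.of_nat i) in L by lia.
  apply (Lim0_congr _ _ _ L). intros z hz. unfold Cdiv. simpl Cpow. ring.
Qed.

(* Converse of [laurent_Lim0_pole]: the coefficients below [-j] vanish one by one,
   each being the limit of [z^j' f] with [j' > j]. *)
Lemma laurent_coef_of_Lim0 (f : C -> C) (r : R) (a : Z -> C) (j : nat) (L : C) :
  laurent f r a -> Lim0 (fun z => Cpow z j * f z) L ->
  (forall k, (k < - Z.of_nat j)%Z -> a k = 0) /\ a (- Z.of_nat j)%Z = L.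
Proof.
  intros Hf HL. pose proof Hf as [_ [N [HN _]]].
  assert (below : forall t k, (k < - Z.of_nat N + Z.of_nat t)%Z -> (k < - Z.of_nat j)%Z -> a k = 0).
  { induction t as [|t IH]; intros k h1 h2; [apply HN; lia|].
    destruct (Z_lt_le_dec k (- Z.of_nat N + Z.of_nat t)) as [h3|h3]; [now apply IH|].
    set (j' := Z.to_nat (- k)).
    assert (L1 := laurent_Lim0_pole f r a j' Hf (fun k' hk' => IH k' ltac:(unfold j' in hk'; lia) ltac:(lia))).
    replace (- Z.of_nat j')%Z with k in L1 by (unfold j'; lia).
    assert (L2 : Lim0 (fun z => Cpow z j' * f z) (0 * L)).
    { apply (Lim0_congr _ _ _ (Lim0_mult _ _ _ _ (Lim0_pow (j' - j) ltac:(unfold j'; lia)) HL)).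
      intros z hz.
      replace j' with ((j' - j) + j)%nat at 2 by (unfold j'; lia). rewrite Cpow_add_r. ring. }
    rewrite (Lim0_unique _ _ _ L1 L2). ring. }
  assert (hk : forall k, (k < - Z.of_nat j)%Z -> a k = 0).
  { intros k hk. destruct (Z_lt_le_dec k (- Z.of_nat N)) as [h|h]; [now apply HN|].
    apply (below (Z.to_nat (k + Z.of_nat N + 1))); lia. }
  split; [exact hk|].
  exact (Lim0_unique _ _ _ (laurent_Lim0_pole f r a j Hf hk) HL).
Qed.

Definition laurent_shift (f : C -> C) (r : R) (a : Z -> C) (N : nat) : Prop :=
  (forall k : Z, (k < - Z.of_nat N)%Z -> a k = 0) /\
  forall z : C, (0 < Cmod z < r)%R ->
    is_series (fun n : nat => a (Z.of_nat n - Z.of_nat N)%Z * Cpow z n) (Cpow z N * f z).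

Lemma laurent_shift_S (f : C -> C) (r : R) (a : Z -> C) (N : nat) :
  laurent_shift f r a N -> laurent_shift f r a (S N).
Proof.
  intros [HN Hs]. split; [intros k hk; apply HN; lia|]. intros z hz.
  apply (@is_series_decr_1 C_AbsRing C_NormedModule).
  rewrite (HN (Z.of_nat 0 - Z.of_nat (S N))%Z) by lia.
  apply (is_series_ext (fun n => scal z (a (Z.of_nat n - Z.of_nat N)%Z * Cpow z n))).
  { intros n. replace (Z.of_nat (S n) - Z.of_nat (S N))%Z with (Z.of_nat n - Z.of_nat N)%Z by lia.
    cbn. ring. }
  match goal with |- is_series _ ?l => replace l with (scal z (Cpow z N * f z)) by (cbn; ring) end.
  now apply (@is_series_scal C_AbsRing C_NormedModule), Hs.
Qed.

Lemma laurent_shift_le (f : C -> C) (r : R) (a : Z -> C) (N N' : nat) :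
  (N <= N')%nat -> laurent_shift f r a N -> laurent_shift f r a N'.
Proof. induction 1; [easy|]. intros HN. now apply laurent_shift_S, IHle. Qed.

Lemma laurent_lin (f g : C -> C) (r : R) (a a' : Z -> C) (al be : C) :
  laurent f r a -> laurent g r a' ->
  laurent (fun z => al * f z + be * g z) r (fun k => al * a k + be * a' k).
Proof.
  intros [r_pos [N1 H1]] [_ [N2 H2]]. split; [exact r_pos|]. exists (max N1 N2).
  destruct (laurent_shift_le _ _ _ _ _ (Nat.le_max_l N1 N2) H1) as [HN1 Hs1].
  destruct (laurent_shift_le _ _ _ _ _ (Nat.le_max_r N1 N2) H2) as [HN2 Hs2].
  split; [intros k hk; rewrite HN1, HN2 by assumption; ring|]. intros z hz.
  assert (Hp := @is_series_plus C_AbsRing C_NormedModule _ _ _ _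
    (@is_series_scal C_AbsRing C_NormedModule al _ _ (Hs1 z hz))
    (@is_series_scal C_AbsRing C_NormedModule be _ _ (Hs2 z hz))).
  match goal with |- is_series _ ?l => replace l with
    (@plus (NormedModule.AbelianMonoid C_AbsRing C_NormedModule)
      (@scal C_AbsRing C_NormedModule al (Cpow z (max N1 N2) * f z))
      (@scal C_AbsRing C_NormedModule be (Cpow z (max N1 N2) * g z))) by (cbn; ring) end.
  eapply is_series_ext; [|exact Hp]. intros n. cbn. ring.
Qed.

Lemma laurent_ext (f g : C -> C) (r : R) (a a' : Z -> C) : (forall k, a k = a' k) ->
  (forall z, (0 < Cmod z < r)%R -> f z = g z) -> laurent f r a -> laurent g r a'.
Proof.
  intros ha hf [r_pos [N [HN Hs]]]. split; [exact r_pos|]. exists N.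
  split; [intros k hk; rewrite <- ha; auto|]. intros z hz.
  rewrite <- hf by assumption. eapply is_series_ext; [|exact (Hs z hz)].
  intros n. cbv beta. now rewrite ha.
Qed.

Lemma laurent_monomial (c : C) (q : nat) (r : R) : (0 < r)%R ->
  laurent (fun z => c / Cpow z q) r (fun k => if Z.eqb k (- Z.of_nat q) then c else 0).
Proof.
  intros r_pos. split; [exact r_pos|]. exists q. split.
  { intros k hk. destruct (Z.eqb_spec k (- Z.of_nat q)); [lia|reflexivity]. }
  intros z hz. assert (Cpow z q <> 0) by now apply Cpow_nz, Cmod_pos_neq0.
  apply (@is_series_decr_1 C_AbsRing C_NormedModule).
  replace (Z.eqb (Z.of_nat 0 - Z.of_nat q) (- Z.of_nat q)) with true by (symmetry; apply Z.eqb_eq; lia).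
  apply (is_series_ext (fun _ => zero)).
  { intros n. replace (Z.eqb (Z.of_nat (S n) - Z.of_nat q) (- Z.of_nat q)) with false
      by (symmetry; apply Z.eqb_neq; lia). cbn. ring. }
  match goal with |- is_series _ ?l => replace l with (@zero C_AbelianGroup) by (cbn; field; assumption) end.
  apply (filterlim_ext (fun _ => zero)); [|apply filterlim_const].
  intros n. symmetry. apply (sum_n_m_const_zero (G := C_AbelianGroup)).
Qed.

Lemma laurent_sub_const (f : C -> C) (r : R) (a : Z -> C) (c : C) : laurent f r a ->
  laurent (fun z => f z - c) r (fun k => if Z.eqb k 0 then a k - c else a k).
Proof.
  intros Hf. eapply laurent_ext;
    [| |exact (laurent_lin _ _ _ _ _ 1 (-1) Hf (laurent_monomial c 0 r (proj1 Hf)))].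
  - intros k. simpl. destruct (Z.eqb k 0); ring.
  - intros z hz. simpl. field.
Qed.

Lemma laurent_Lim0_sub_principal_part (p : nat) (f : C -> C) (r : R) (a : Z -> C) :
  laurent f r a -> (forall k, (k < - Z.of_nat p)%Z -> a k = 0) ->
  Lim0 (fun z => f z - sum_n_m (fun j => a (- Z.of_nat j)%Z / Cpow z j) 1 p) (a 0%Z).
Proof.
  revert f a. induction p as [|p IH]; intros f a Hf Hk.
  - apply (Lim0_congr _ _ _ (laurent_Lim0_pole f r a 0 Hf Hk)). intros z hz.
    rewrite sum_n_m_zero by lia. cbn. ring.
  - set (c := a (- Z.of_nat (S p))%Z).
    assert (Hf' := laurent_lin _ _ r a _ 1 (-1) Hf (laurent_monomial c (S p) r (proj1 Hf))).
    assert (Hk' : forall k, (k < - Z.of_nat p)%Z ->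
      1 * a k + -1 * (if Z.eqb k (- Z.of_nat (S p)) then c else 0) = 0).
    { intros k hk. destruct (Z.eqb_spec k (- Z.of_nat (S p))) as [->|]; [unfold c; ring|].
      rewrite Hk by lia. ring. }
    assert (IH' := IH _ _ Hf' Hk'). cbv beta in IH'.
    replace (Z.eqb 0 (- Z.of_nat (S p))) with false in IH' by (symmetry; apply Z.eqb_neq; lia).
    replace (a 0%Z) with (1 * a 0%Z + -1 * 0) by ring.
    apply (Lim0_congr _ _ _ IH'). intros z hz. rewrite sum_n_Sm by lia.
    rewrite (sum_n_m_ext_loc _ (fun j => a (- Z.of_nat j)%Z / Cpow z j)).
    + unfold c. cbn. ring.
    + intros k hk. replace (Z.eqb (- Z.of_nat k) (- Z.of_nat (S p))) with false
        by (symmetry; apply Z.eqb_neq; lia). cbn. field. now apply Cpow_nz.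
Qed.

Lemma sum_n_m_split_first_two (G : nat -> C) (m : nat) :
  sum_n_m G 1 (m + 2) = G 1%nat + G 2%nat + sum_n_m (fun k => G (k + 2)%nat) 1 m.
Proof.
  induction m as [|m IH].
  - rewrite (sum_n_m_zero _ 1 0) by lia. simpl. rewrite sum_n_Sm, sum_n_n by lia. cbn. ring.
  - replace (S m + 2)%nat with (S (m + 2)) by lia.
    rewrite sum_n_Sm, IH, (sum_n_Sm (fun k => G (k + 2)%nat)) by lia. cbn. ring.
Qed.

Definition lightlike_principal_part (alpha : nat -> C) (m : nat) (z : C) : C :=
  sum_n_m (fun k => alpha (k + 2)%nat / Cpow z (k + 2)) 1 m.

Lemma laurent_remainder_bounded (f : C -> C) (r : R) (a : Z -> C) (m : nat) (alpha : nat -> C) (v : C) :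
  laurent f r a -> (forall k, (k < - (Z.of_nat m + 2))%Z -> a k = 0) -> a (-1)%Z = 0 ->
  (forall k, (1 <= k <= m)%nat -> a (- (Z.of_nat k + 2))%Z = alpha (k + 2)%nat * v) ->
  exists M : R, near0 (fun z =>
    Cmod (f z - (lightlike_principal_part alpha m z * v + / Cpow z 2 * a (-2)%Z)) <= M)%R.
Proof.
  intros Hf Hk Hres Halpha.
  assert (L := laurent_Lim0_sub_principal_part (m + 2) f r a Hf (fun k hk => Hk k ltac:(lia))).
  exists (Cmod (a 0%Z) + 1)%R.
  eapply near0_mono; [|exact (Lim0_bounded _ _ L)]. intros z hz. cbv beta.
  assert (principal : sum_n_m (fun j => a (- Z.of_nat j)%Z / Cpow z j) 1 (m + 2) =
                      lightlike_principal_part alpha m z * v + / Cpow z 2 * a (-2)%Z).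
  { rewrite sum_n_m_split_first_two.
    change (- Z.of_nat 1)%Z with (-1)%Z. change (- Z.of_nat 2)%Z with (-2)%Z. rewrite Hres.
    replace (lightlike_principal_part alpha m z * v)
      with (sum_n_m (fun k => a (- Z.of_nat (k + 2))%Z / Cpow z (k + 2)) 1 m).
    - cbn. field. exact hz.
    - unfold lightlike_principal_part. rewrite <- (sum_n_m_mult_r (K := C_Ring)).
      apply sum_n_m_ext_loc. intros k hk.
      replace (- Z.of_nat (k + 2))%Z with (- (Z.of_nat k + 2))%Z by lia.
      rewrite Halpha by lia. cbn. field. now apply Cpow_nz. }
  now rewrite principal.
Qed.

Definition V4bounded_near0 (g : C -> V4) : Prop :=
  exists r' M : R, (0 < r')%R /\ forall z : C, (0 < Cmod z < r')%R -> (V4norm (g z) <= M)%R.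

Lemma laurentV_expansion (F : C -> V4) (r : R) (b : Z -> V4) (m : nat) (alpha : nat -> C) (v0 : V4) :
  laurentV F r b -> (forall k, (k < - (Z.of_nat m + 2))%Z -> b k = V4zero) -> b (-1)%Z = V4zero ->
  (forall k, (1 <= k <= m)%nat -> b (- (Z.of_nat k + 2))%Z = V4scale (alpha (k + 2)%nat) v0) ->
  exists g : C -> V4, V4bounded_near0 g /\ forall z : C, z <> 0 ->
    F z = V4add (V4scale (lightlike_principal_part alpha m z) v0)
                (V4add (V4scale (/ Cpow z 2) (b (-2)%Z)) (g z)).
Proof.
  intros [H1 [H2 [H3 H4]]] Hk Hres Halpha.
  set (S := lightlike_principal_part alpha m).
  destruct (laurent_remainder_bounded _ _ _ m alpha (vc1 v0) H1 (fun k hk => f_equal vc1 (Hk k hk))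
    (f_equal vc1 Hres) (fun k hk => f_equal vc1 (Halpha k hk))) as [M1 B1].
  destruct (laurent_remainder_bounded _ _ _ m alpha (vc2 v0) H2 (fun k hk => f_equal vc2 (Hk k hk))
    (f_equal vc2 Hres) (fun k hk => f_equal vc2 (Halpha k hk))) as [M2 B2].
  destruct (laurent_remainder_bounded _ _ _ m alpha (vc3 v0) H3 (fun k hk => f_equal vc3 (Hk k hk))
    (f_equal vc3 Hres) (fun k hk => f_equal vc3 (Halpha k hk))) as [M3 B3].
  destruct (laurent_remainder_bounded _ _ _ m alpha (vc4 v0) H4 (fun k hk => f_equal vc4 (Hk k hk))
    (f_equal vc4 Hres) (fun k hk => f_equal vc4 (Halpha k hk))) as [M4 B4].
  exists (fun z => mkV4 (vc1 (F z) - (S z * vc1 v0 + / Cpow z 2 * vc1 (b (-2)%Z)))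
                    (vc2 (F z) - (S z * vc2 v0 + / Cpow z 2 * vc2 (b (-2)%Z)))
                    (vc3 (F z) - (S z * vc3 v0 + / Cpow z 2 * vc3 (b (-2)%Z)))
                    (vc4 (F z) - (S z * vc4 v0 + / Cpow z 2 * vc4 (b (-2)%Z)))).
  split.
  - destruct (near0_and _ _ (near0_and _ _ B1 B2) (near0_and _ _ B3 B4)) as [r' [hr' HB]].
    exists r', (M1 + M2 + M3 + M4)%R. split; [exact hr'|]. intros z hz.
    destruct (HB z hz) as [[h1 h2] [h3 h4]]. unfold V4norm, S. cbn [vc1 vc2 vc3 vc4]. lra.
  - intros z _. destruct (F z). unfold V4add, V4scale. cbn. f_equal; ring.
Qed.

(** * Lorentzian algebra *)

Definition V4dot (l v : V4) : C :=
  vc1 l * vc1 v + vc2 l * vc2 v + vc3 l * vc3 v + vc4 l * vc4 v.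

Lemma laurentV_dot (F : C -> V4) (r : R) (b : Z -> V4) (l : V4) :
  laurentV F r b -> laurent (fun z => V4dot l (F z)) r (fun k => V4dot l (b k)).
Proof.
  intros [H1 [H2 [H3 H4]]].
  assert (L12 := laurent_lin _ _ _ _ _ (vc1 l) (vc2 l) H1 H2).
  assert (L123 := laurent_lin _ _ _ _ _ 1 (vc3 l) L12 H3).
  assert (L := laurent_lin _ _ _ _ _ 1 (vc4 l) L123 H4).
  eapply laurent_ext; [| |exact L]; intros; unfold V4dot; ring.
Qed.

Lemma lorC_R4toV4_l (u : R4) (v : V4) :
  lorC (R4toV4 u) v = (lorR u (V4Re v), lorR u (V4Im v)).
Proof.
  destruct u as [u1 u2 u3 u4], v as [[x1 y1] [x2 y2] [x3 y3] [x4 y4]].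
  unfold lorC, lorR, R4toV4, V4Re, V4Im, Cminus, Cplus, Cmult, Copp, RtoC. cbn. f_equal; ring.
Qed.

Lemma lorC_R4toV4 (u : R4) : lorC (R4toV4 u) (R4toV4 u) = RtoC (lorR u u).
Proof.
  rewrite lorC_R4toV4_l. destruct u. unfold lorR, V4Re, V4Im, RtoC. cbn. f_equal. ring.
Qed.

Lemma lorC_combination (s t : C) (u w : V4) :
  lorC (V4add (V4scale s u) (V4scale t w)) (V4add (V4scale s u) (V4scale t w)) =
  s * s * lorC u u + 2 * s * t * lorC u w + t * t * lorC w w.
Proof. destruct u, w. unfold lorC, V4add, V4scale. cbn. ring. Qed.

Lemma lorC_combination_l (u : R4) (s t : C) (w : V4) :
  lorC (R4toV4 u) (V4add (V4scale s (R4toV4 u)) (V4scale t w)) =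
  s * lorC (R4toV4 u) (R4toV4 u) + t * lorC (R4toV4 u) w.
Proof. destruct u, w. unfold lorC, V4add, V4scale, R4toV4. cbn. ring. Qed.

Lemma R4lin3_Re_Im_combination (a b c : R) (s t : C) (u : R4) (w : V4) :
  R4lin3 a b c u (V4Re (V4add (V4scale s (R4toV4 u)) (V4scale t w)))
                 (V4Im (V4add (V4scale s (R4toV4 u)) (V4scale t w))) =
  R4lin3 (a + b * fst s + c * snd s) (b * fst t + c * snd t) (c * fst t - b * snd t)
         u (V4Re w) (V4Im w).
Proof.
  destruct s as [s1 s2], t as [t1 t2], u, w as [[x1 y1] [x2 y2] [x3 y3] [x4 y4]].
  unfold R4lin3, V4Re, V4Im, V4add, V4scale, R4toV4, Cplus, Cmult, RtoC. cbn. f_equal; ring.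
Qed.

Lemma C_sqr_norm_pos (t : C) : t <> 0 -> (0 < fst t * fst t + snd t * snd t)%R.
Proof.
  destruct t as [t1 t2]. cbn. intros ht.
  destruct (Req_dec t1 0) as [->|h1]; destruct (Req_dec t2 0) as [->|h2]; [now exfalso|nra..].
Qed.

Definition R4independent3 (u1 u2 u3 : R4) : Prop :=
  forall a b c : R, R4lin3 a b c u1 u2 u3 = R4zero -> a = 0%R /\ b = 0%R /\ c = 0%R.

(* [u] is orthogonal to [u], [Re w] and [Im w], so it lies in the radical of the span. *)
Lemma span_degenerate_combination (u : R4) (w : V4) (s t : C) :
  lightlike u -> isotropic w -> lorC (R4toV4 u) w = 0 -> R4independent3 u (V4Re w) (V4Im w) ->
  t <> 0 ->
  isotropic (V4add (V4scale s (R4toV4 u)) (V4scale t w)) /\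
  span_degenerate_3dim u (V4Re (V4add (V4scale s (R4toV4 u)) (V4scale t w)))
                         (V4Im (V4add (V4scale s (R4toV4 u)) (V4scale t w))).
Proof.
  intros [hu0 huu] hww huw hind ht.
  assert (huuC : lorC (R4toV4 u) (R4toV4 u) = 0) by (rewrite lorC_R4toV4, huu; reflexivity).
  split; [|split].
  - unfold isotropic. rewrite lorC_combination, huuC, huw, hww. ring.
  - intros a b c e. rewrite R4lin3_Re_Im_combination in e.
    destruct (hind _ _ _ e) as [ha [hb hc]].
    set (n := (fst t * fst t + snd t * snd t)%R). assert (hn : (0 < n)%R) by now apply C_sqr_norm_pos.
    assert (hbn : (b * n = 0)%R).
    { replace (b * n)%R with (fst t * (b * fst t + c * snd t) - snd t * (c * fst t - b * snd t))%R
        by (unfold n; ring). rewrite hb, hc. ring. }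
    assert (hcn : (c * n = 0)%R).
    { replace (c * n)%R with (snd t * (b * fst t + c * snd t) + fst t * (c * fst t - b * snd t))%R
        by (unfold n; ring). rewrite hb, hc. ring. }
    destruct (Rmult_integral _ _ hbn), (Rmult_integral _ _ hcn); try lra.
    subst b c. split; [lra | split; reflexivity].
  - exists 1%R, 0%R, 0%R.
    assert (e : R4lin3 1 0 0 u (V4Re (V4add (V4scale s (R4toV4 u)) (V4scale t w)))
                  (V4Im (V4add (V4scale s (R4toV4 u)) (V4scale t w))) = u)
      by (destruct u; unfold R4lin3; cbn; f_equal; ring).
    cbv zeta. rewrite e.
    assert (horth := lorC_combination_l u s t w). rewrite huuC, huw, lorC_R4toV4_l in horth.
    replace (s * 0 + t * 0) with (RtoC 0) in horth by ring.
    injection horth as h1 h2. repeat split; assumption.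
Qed.

(** * Expansion along a frame adapted to the end *)

Lemma V4dot_zero_r (l : V4) : V4dot l V4zero = 0.
Proof. unfold V4dot, V4zero. cbn. ring. Qed.

Lemma V4scale_0_l (v : V4) : V4scale 0 v = V4zero.
Proof. destruct v. unfold V4scale, V4zero. cbn. f_equal; ring. Qed.

Lemma V4add_zero_r (v : V4) : V4add v V4zero = v.
Proof. destruct v. unfold V4add, V4zero. cbn. f_equal; ring. Qed.

Definition frame_decomposition (u : R4) (w w' y l0 l1 l2 l3 : V4) : Prop :=
  forall v : V4,
    v = V4add (V4scale (V4dot l0 v) (R4toV4 u))
          (V4add (V4scale (V4dot l1 v) w)
            (V4add (V4scale (V4dot l2 v) w') (V4scale (V4dot l3 v) y))).

Definition lightlike_end_expansion (F : C -> V4) (m : nat) : Prop :=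
  exists (alpha : nat -> C) (v0 : R4) (v1 : V4) (g : C -> V4) (r' M : R),
    alpha (m + 2)%nat <> 0 /\
    lightlike v0 /\ isotropic v1 /\
    span_degenerate_3dim v0 (V4Re v1) (V4Im v1) /\
    (0 < r')%R /\
    (forall z : C, (0 < Cmod z < r')%R -> (V4norm (g z) <= M)%R) /\
    (forall z : C, (0 < Cmod z < r')%R ->
       F z =
       V4add (V4scale (sum_n_m (fun k => alpha (k + 2)%nat / Cpow z (k + 2)) 1 m)
                      (R4toV4 v0))
             (V4add (V4scale (/ (Cpow z 2)) v1) (g z))).

Section FrameExpansion.

Variables (F : C -> V4) (r : R) (b : Z -> V4) (m : nat).
Hypothesis F_laurent : laurentV F r b.
Hypothesis m_pos : (1 <= m)%nat.
Hypothesis b_order : has_orderV b (- (Z.of_nat m + 2))%Z.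
Hypothesis no_residue : b (-1)%Z = V4zero.

Variables (u0 : R4) (w w' y l0 l1 l2 l3 : V4).
Hypothesis frame : frame_decomposition u0 w w' y l0 l1 l2 l3.

Let K (k : Z) : C := V4dot l0 (b k).

(* [l0 . F] has a pole of order at most [m + 2], so a coordinate equal to it times a
   function vanishing to order [m] has a pole of order at most [2]. *)
Lemma frame_coord_pole_le_2 (l : V4) (h : C -> C) (L : C) :
  near0 (fun z => V4dot l (F z) = V4dot l0 (F z) * h z) -> Lim0 (fun z => h z / Cpow z m) L ->
  (forall k, (k < -2)%Z -> V4dot l (b k) = 0) /\ V4dot l (b (-2)%Z) = K (- (Z.of_nat m + 2))%Z * L.
Proof.
  intros Hl Hh.
  assert (l0_low : forall k, (k < - Z.of_nat (m + 2))%Z -> V4dot l0 (b k) = 0).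
  { intros k hk. rewrite (proj2 b_order k) by lia. apply V4dot_zero_r. }
  assert (HK := laurent_Lim0_pole _ _ _ (m + 2) (laurentV_dot F r b l0 F_laurent) l0_low).
  replace (- Z.of_nat (m + 2))%Z with (- (Z.of_nat m + 2))%Z in HK by lia.
  refine (laurent_coef_of_Lim0 _ _ _ 2 _ (laurentV_dot F r b l F_laurent)
           (Lim0_ext _ _ _ _ (Lim0_mult _ _ _ _ HK Hh))).
  eapply near0_mono; [|exact Hl]. intros z hz e. cbv beta. rewrite e, Cpow_add_r.
  field. now apply Cpow_nz.
Qed.

Variables (u t : C -> C) (kappa : C).
Hypothesis coord1 : near0 (fun z => V4dot l1 (F z) = V4dot l0 (F z) * u z).
Hypothesis coord2 : near0 (fun z => V4dot l2 (F z) = V4dot l0 (F z) * t z).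
Hypothesis coord3 : near0 (fun z => V4dot l3 (F z) = V4dot l0 (F z) * (u z * t z)).
Hypothesis u_order : Lim0 (fun z => u z / Cpow z m) kappa.
Hypothesis kappa_neq0 : kappa <> 0.
Hypothesis t_order : Lim0 (fun z => t z / Cpow z m) 0.

Lemma ut_order : Lim0 (fun z => u z * t z / Cpow z m) 0.
Proof.
  replace (RtoC 0) with (kappa * (0 * 0)) by ring.
  apply (Lim0_congr _ _ _ (Lim0_mult _ _ _ _ u_order (Lim0_mult _ _ _ _ t_order (Lim0_pow m m_pos)))).
  intros z hz. field. now apply Cpow_nz.
Qed.

Let coefs1 := frame_coord_pole_le_2 l1 u kappa coord1 u_order.
Let coefs2 := frame_coord_pole_le_2 l2 t 0 coord2 t_order.
Let coefs3 := frame_coord_pole_le_2 l3 (fun z => u z * t z) 0 coord3 ut_order.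

Lemma frame_coefs_2 :
  b (-2)%Z = V4add (V4scale (K (-2)%Z) (R4toV4 u0)) (V4scale (V4dot l1 (b (-2)%Z)) w).
Proof.
  rewrite (frame (b (-2)%Z)) at 1.
  rewrite (proj2 coefs2), (proj2 coefs3), Cmult_0_r, !V4scale_0_l, !V4add_zero_r. reflexivity.
Qed.

Lemma frame_coefs_below_2 (k : Z) : (k < -2)%Z -> b k = V4scale (K k) (R4toV4 u0).
Proof.
  intros hk. rewrite (frame (b k)) at 1.
  rewrite (proj1 coefs1 k hk), (proj1 coefs2 k hk), (proj1 coefs3 k hk), !V4scale_0_l, !V4add_zero_r.
  reflexivity.
Qed.

Hypotheses (u0_lightlike : lightlike u0) (w_isotropic : isotropic w)
  (u0_w_orth : lorC (R4toV4 u0) w = 0) (u0_w_indep : R4independent3 u0 (V4Re w) (V4Im w)).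

Lemma frame_lightlike_end_expansion : lightlike_end_expansion F m.
Proof.
  assert (hK : K (- (Z.of_nat m + 2))%Z <> 0).
  { intros e. apply (proj1 b_order). rewrite frame_coefs_below_2 by lia. rewrite e. apply V4scale_0_l. }
  set (alpha := fun n : nat => K (- Z.of_nat n)%Z).
  destruct (laurentV_expansion F r b m alpha (R4toV4 u0) F_laurent (proj2 b_order) no_residue)
    as [g [[r' [M [hr' HM]]] HF]].
  { intros k hk. unfold alpha. rewrite frame_coefs_below_2 by lia. do 3 f_equal. lia. }
  destruct (span_degenerate_combination u0 w (K (-2)%Z) (V4dot l1 (b (-2)%Z)) u0_lightlike w_isotropic
    u0_w_orth u0_w_indep) as [Hiso Hdeg].
  { rewrite (proj2 coefs1). now apply Cmult_neq_0. }
  rewrite <- frame_coefs_2 in Hiso, Hdeg.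
  exists alpha, u0, (b (-2)%Z), g, r', M.
  split; [|split; [exact u0_lightlike | split; [exact Hiso | split; [exact Hdeg|]]]].
  - unfold alpha. replace (- Z.of_nat (m + 2))%Z with (- (Z.of_nat m + 2))%Z by lia. exact hK.
  - split; [exact hr'|]. split; [exact HM|]. intros z hz. apply HF, Cmod_pos_neq0, hz.
Qed.

End FrameExpansion.

(** * The two frames of the Weierstrass representation *)

(* The vectors are the Taylor coefficients of [G], which is affine in each variable, at
   [(c, conj c)], resp. of [p s G(1/p, 1/s)] at [(0, 0)]; the [l_i] form the dual basis. *)

Definition fin_u (c : C) : R4 :=
  mkR4 (2 * fst c) (2 * snd c) (1 - (fst c * fst c + snd c * snd c))
       (1 + (fst c * fst c + snd c * snd c)).
Definition fin_w (c : C) : V4 := mkV4 1 (- Ci) (- Cconj c) (Cconj c).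
Definition fin_w' (c : C) : V4 := mkV4 1 Ci (- c) c.
Definition fin_y : V4 := mkV4 0 0 (-1) 1.
Definition fin_l0 : V4 := mkV4 0 0 (/ 2) (/ 2).
Definition fin_l1 (c : C) : V4 := mkV4 (/ 2) (Ci / 2) (- c / 2) (- c / 2).
Definition fin_l2 (c : C) : V4 := mkV4 (/ 2) (- Ci / 2) (- Cconj c / 2) (- Cconj c / 2).
Definition fin_l3 (c : C) : V4 :=
  mkV4 (- (Cconj c + c) / 2) (Ci * (c - Cconj c) / 2) ((-1 + c * Cconj c) / 2)
       ((1 + c * Cconj c) / 2).

Definition inf_u : R4 := mkR4 0 0 (-1) 1.
Definition inf_w : V4 := mkV4 1 Ci 0 0.
Definition inf_w' : V4 := mkV4 1 (- Ci) 0 0.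
Definition inf_y : V4 := mkV4 0 0 1 1.
Definition inf_l0 : V4 := mkV4 0 0 (- / 2) (/ 2).
Definition inf_l1 : V4 := mkV4 (/ 2) (- Ci / 2) 0 0.
Definition inf_l2 : V4 := mkV4 (/ 2) (Ci / 2) 0 0.

(* Unfolding the operations of [C] is very slow; projecting to [fst]/[snd] is not. *)
Ltac C_by_components := apply injective_projections; simpl; field.

Lemma fin_frame_decomposition (c : C) :
  frame_decomposition (fin_u c) (fin_w c) (fin_w' c) fin_y fin_l0 (fin_l1 c) (fin_l2 c) (fin_l3 c).
Proof.
  intros v. destruct v.
  unfold V4dot, V4add, V4scale, R4toV4, fin_u, fin_w, fin_w', fin_y, fin_l0, fin_l1, fin_l2, fin_l3.
  simpl. f_equal; C_by_components.
Qed.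

Lemma inf_frame_decomposition :
  frame_decomposition inf_u inf_w inf_w' inf_y inf_l0 inf_l1 inf_l2 fin_l0.
Proof.
  intros v. destruct v.
  unfold V4dot, V4add, V4scale, R4toV4, inf_u, inf_w, inf_w', inf_y, inf_l0, inf_l1, inf_l2, fin_l0.
  simpl. f_equal; C_by_components.
Qed.

Section WeierstrassCoordinates.

Variables (phi psi hp : C -> C) (z : C).

Lemma fin_l0_xz : V4dot fin_l0 (xz phi psi hp z) = hp z.
Proof. unfold V4dot, fin_l0, xz. simpl. C_by_components. Qed.

Lemma fin_l1_xz (c : C) : V4dot (fin_l1 c) (xz phi psi hp z) = hp z * (phi z - c).
Proof. unfold V4dot, fin_l1, xz. simpl. C_by_components. Qed.

Lemma fin_l2_xz (c : C) : V4dot (fin_l2 c) (xz phi psi hp z) = hp z * (psi z - Cconj c).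
Proof. unfold V4dot, fin_l2, xz. simpl. C_by_components. Qed.

Lemma fin_l3_xz (c : C) :
  V4dot (fin_l3 c) (xz phi psi hp z) = hp z * ((phi z - c) * (psi z - Cconj c)).
Proof. unfold V4dot, fin_l3, xz. simpl. C_by_components. Qed.

Lemma inf_l0_xz : V4dot inf_l0 (xz phi psi hp z) = hp z * phi z * psi z.
Proof. unfold V4dot, inf_l0, xz. simpl. C_by_components. Qed.

Lemma inf_l1_xz : V4dot inf_l1 (xz phi psi hp z) = hp z * psi z.
Proof. unfold V4dot, inf_l1, xz. simpl. C_by_components. Qed.

Lemma inf_l2_xz : V4dot inf_l2 (xz phi psi hp z) = hp z * phi z.
Proof. unfold V4dot, inf_l2, xz. simpl. C_by_components. Qed.

End WeierstrassCoordinates.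

Lemma fin_u_lightlike (c : C) : lightlike (fin_u c).
Proof.
  split.
  - intros e. apply (f_equal vr4) in e. unfold fin_u in e. cbn in e. nra.
  - unfold lorR, fin_u. cbn. ring.
Qed.

Lemma fin_w_isotropic (c : C) : isotropic (fin_w c).
Proof. unfold isotropic, lorC, fin_w. simpl. C_by_components. Qed.

Lemma fin_u_w_orth (c : C) : lorC (R4toV4 (fin_u c)) (fin_w c) = 0.
Proof. unfold lorC, R4toV4, fin_u, fin_w. simpl. C_by_components. Qed.

Lemma fin_u_w_independent (c : C) : R4independent3 (fin_u c) (V4Re (fin_w c)) (V4Im (fin_w c)).
Proof.
  intros x y z e. unfold R4lin3, fin_u, fin_w, V4Re, V4Im, R4zero in e. cbn in e.
  injection e as e1 e2 e3 e4. nra.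
Qed.

Lemma inf_u_lightlike : lightlike inf_u.
Proof.
  split.
  - intros e. apply (f_equal vr4) in e. cbn in e. lra.
  - unfold lorR, inf_u. cbn. ring.
Qed.

Lemma inf_w_isotropic : isotropic inf_w.
Proof. unfold isotropic, lorC, inf_w. simpl. C_by_components. Qed.

Lemma inf_u_w_orth : lorC (R4toV4 inf_u) inf_w = 0.
Proof. unfold lorC, R4toV4, inf_u, inf_w. simpl. C_by_components. Qed.

Lemma inf_u_w_independent : R4independent3 inf_u (V4Re inf_w) (V4Im inf_w).
Proof.
  intros x y z e. unfold R4lin3, inf_u, inf_w, V4Re, V4Im, R4zero in e. cbn in e.
  injection e as e1 e2 e3 e4. lra.
Qed.

Lemma xz_finite_value_expansion (phi psi hp : C -> C) (r : R) (aphi apsi : Z -> C)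
  (b : Z -> V4) (m n : nat) (c : C) :
  laurent phi r aphi -> laurent psi r apsi -> laurentV (xz phi psi hp) r b ->
  (1 <= m)%nat -> has_orderV b (- (Z.of_nat m + 2))%Z -> b (-1)%Z = V4zero ->
  mult_value aphi (Some c) m -> mult_value apsi (Some (Cconj c)) n -> (m < n)%nat ->
  lightlike_end_expansion (xz phi psi hp) m.
Proof.
  intros Hphi Hpsi Hb Hm Hord Hres [_ [hu_m Hu_low]] [_ [_ Ht_low]] Hmn.
  assert (Hu := laurent_Lim0_zero _ _ _ m (laurent_sub_const _ _ _ c Hphi)
    (fun k hk => Hu_low k hk)).
  assert (Ht := laurent_Lim0_zero _ _ _ m (laurent_sub_const _ _ _ (Cconj c) Hpsi)
    (fun k hk => Ht_low k ltac:(lia))).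
  cbv beta in Ht. rewrite (Ht_low (Z.of_nat m)) in Ht by lia.
  refine (frame_lightlike_end_expansion _ r b m Hb Hm Hord Hres _ _ _ _ _ _ _ _
    (fin_frame_decomposition c) (fun z => phi z - c) (fun z => psi z - Cconj c) _ _ _ _ Hu hu_m Ht
    (fin_u_lightlike c) (fin_w_isotropic c) (fin_u_w_orth c) (fin_u_w_independent c));
    apply near0_all; intros z _.
  - rewrite fin_l1_xz, fin_l0_xz. reflexivity.
  - rewrite fin_l2_xz, fin_l0_xz. reflexivity.
  - rewrite fin_l3_xz, fin_l0_xz. reflexivity.
Qed.

Lemma xz_infinite_value_expansion (phi psi hp : C -> C) (r : R) (aphi apsi : Z -> C)
  (b : Z -> V4) (m n : nat) :
  laurent phi r aphi -> laurent psi r apsi -> laurentV (xz phi psi hp) r b ->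
  (1 <= m)%nat -> has_orderV b (- (Z.of_nat m + 2))%Z -> b (-1)%Z = V4zero ->
  mult_value aphi None m -> mult_value apsi None n -> (m < n)%nat ->
  lightlike_end_expansion (xz phi psi hp) m.
Proof.
  intros Hphi Hpsi Hb Hm Hord Hres [_ [hphi_m Hphi_low]] [_ [hpsi_n Hpsi_low]] Hmn.
  assert (Lphi := laurent_Lim0_pole phi r aphi m Hphi Hphi_low).
  assert (Lpsi := laurent_Lim0_pole psi r apsi n Hpsi Hpsi_low).
  assert (nz : near0 (fun z => phi z <> 0 /\ psi z <> 0)).
  { eapply near0_mono; [|exact (near0_and _ _ (Lim0_nonzero _ _ Lphi hphi_m) (Lim0_nonzero _ _ Lpsi hpsi_n))].
    intros z _ [h1 h2]. split; intros e; [apply h1 | apply h2]; rewrite e; ring. }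
  assert (Hu : Lim0 (fun z => / phi z / Cpow z m) (/ aphi (- Z.of_nat m)%Z)).
  { eapply Lim0_ext; [|exact (Lim0_inv _ _ hphi_m Lphi)].
    eapply near0_mono; [|exact nz]. intros z hz [h1 _]. field. repeat split; auto using Cpow_nz. }
  assert (Ht : Lim0 (fun z => / psi z / Cpow z m) 0).
  { replace (RtoC 0) with (0 * / apsi (- Z.of_nat n)%Z) by ring.
    eapply Lim0_ext; [|exact (Lim0_mult _ _ _ _ (Lim0_pow (n - m) ltac:(lia)) (Lim0_inv _ _ hpsi_n Lpsi))].
    eapply near0_mono; [|exact nz]. intros z hz [_ h2].
    replace n with ((n - m) + m)%nat at 2 by lia. rewrite Cpow_add_r.
    field. repeat split; auto using Cpow_nz. }
  assert (hkappa : / aphi (- Z.of_nat m)%Z <> 0).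
  { intros e. apply C1_nz. rewrite <- (Cinv_r _ hphi_m), e. ring. }
  refine (frame_lightlike_end_expansion _ r b m Hb Hm Hord Hres _ _ _ _ _ _ _ _
    inf_frame_decomposition (fun z => / phi z) (fun z => / psi z) _ _ _ _ Hu
    hkappa Ht inf_u_lightlike inf_w_isotropic inf_u_w_orth inf_u_w_independent);
    eapply near0_mono; try exact nz; intros z _ [h1 h2].
  - rewrite inf_l1_xz, inf_l0_xz. field. exact h1.
  - rewrite inf_l2_xz, inf_l0_xz. field. exact h2.
  - rewrite fin_l0_xz, inf_l0_xz. field. split; assumption.
Qed.

Lemma end_index_pos_mult_values (aphi apsi : Z -> C) (m : nat) : (1 <= m)%nat ->
  end_index aphi apsi (Z.of_nat m) ->
  exists v n, mult_value aphi v m /\ mult_value apsi (oconj v) n /\ (m < n)%nat.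
Proof.
  intros Hm [[v [m' [n [H1 [H2 [[Hlt Hi] | [Hlt Hi]]]]]]] | [_ Hi]].
  - assert (m' = m) by lia. subst m'. now exists v, n.
  - destruct H2 as [hn _]. lia.
  - lia.
Qed.

(* The hypotheses [Hh], [Hreg] and [Hgood] are not needed: the index [m >= 1] already
   forces the end to be good, and only the Laurent coefficients of [x_z] enter. *)
Theorem mainTheorem4
  (phi psi hp : C -> C) (r : R) (aphi apsi ah : Z -> C) (b : Z -> V4)
  (m d : nat)
  (Hphi : laurent phi r aphi) (Hpsi : laurent psi r apsi) (Hh : laurent hp r ah)
  (Hreg : forall z : C, (0 < Cmod z < r)%R -> phi z <> Cconj (psi z) /\ hp z <> 0)
  (Hb : laurentV (xz phi psi hp) r b)
  (Hgood : good_singular_end aphi apsi)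
  (Hm : (1 <= m)%nat)
  (Hind : end_index aphi apsi (Z.of_nat m))
  (Hd : has_orderV b (- (Z.of_nat d + 1))%Z)
  (Hmult : (Z.of_nat d - Z.of_nat m = 1)%Z)
  (Hflux : b (-1)%Z = V4zero) :
  exists (alpha : nat -> C) (v0 : R4) (v1 : V4) (g : C -> V4) (r' M : R),
    alpha (m + 2)%nat <> 0 /\
    lightlike v0 /\ isotropic v1 /\
    span_degenerate_3dim v0 (V4Re v1) (V4Im v1) /\
    (0 < r')%R /\
    (forall z : C, (0 < Cmod z < r')%R -> (V4norm (g z) <= M)%R) /\
    (forall z : C, (0 < Cmod z < r')%R ->
       xz phi psi hp z =
       V4add (V4scale (sum_n_m (fun k => alpha (k + 2)%nat / Cpow z (k + 2)) 1 m)
                      (R4toV4 v0))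
             (V4add (V4scale (/ (Cpow z 2)) v1) (g z))).
Proof.
  replace (- (Z.of_nat d + 1))%Z with (- (Z.of_nat m + 2))%Z in Hd by lia.
  destruct (end_index_pos_mult_values aphi apsi m Hm Hind) as [[c|] [n [Hmphi [Hmpsi Hmn]]]].
  - exact (xz_finite_value_expansion phi psi hp r aphi apsi b m n c
             Hphi Hpsi Hb Hm Hd Hflux Hmphi Hmpsi Hmn).
  - exact (xz_infinite_value_expansion phi psi hp r aphi apsi b m n
             Hphi Hpsi Hb Hm Hd Hflux Hmphi Hmpsi Hmn).
Qed.
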